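(* Let $n,r\ge1$ and let $\mathbf i=(i_k)_{k\in\mathbb Z}$ be a sequence of integers with $i_{k+r}=i_k+n$ for all $k$. Let $A^{\mathbf i}=(a_{k,l})_{k,l\in\mathbb Z}$ with $a_{k,l}=\delta_{k,i_l}$. Then $d_{A^{\mathbf i}}=|\mathrm{Inv}(\mathbf i)|$, where $\mathrm{Inv}(\mathbf i)=\{(s,t)\in\mathbb Z^2\mid 1\le s\le r,\ s<t,\ i_s\ge i_t\}$.
   Context: For a matrix $A=(a_{i,j})_{i,j\in\mathbb Z}$ with entries in $\mathbb N$ satisfying $a_{i+n,j+n}=a_{i,j}$ (as is the case for $A^{\mathbf i}$), define $d_A=\sum a_{i,j}a_{k,l}$, the sum running over all $i,j,k,l\in\mathbb Z$ with $1\le i\le n$, $k\le i$ and $j<l$. *)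

From HB Require Import structures.
From mathcomp Require Import all_boot all_order all_algebra.
From mathcomp Require Import classical_sets cardinality reals constructive_ereal esum.
Set Implicit Arguments. Unset Strict Implicit. Unset Printing Implicit Defensive.
Import Order.TTheory GRing.Theory Num.Theory.
Local Open Scope ring_scope.
Local Open Scope classical_set_scope.

Definition Amat (iseq : int -> int) : int -> int -> nat :=
  fun k l => nat_of_bool (k == iseq l).

Definition dA_index (n : nat) : set (int * int * int * int) :=
  [set x | let '(i, j, k, l) := x in [&& (1 <= i), (i <= n%:Z), (k <= i) & (j < l)]].

Definition dA (R : realType) (n : nat) (A : int -> int -> nat) : \bar R :=
  (\esum_(x in dA_index n)
     (((A x.1.1.1 x.1.1.2 * A x.1.2 x.2)%N)%:R : R)%:E)%E.

Definition Inv (r : nat) (iseq : int -> int) : set (int * int) :=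
  [set st | [&& (1 <= st.1), (st.1 <= r%:Z), (st.1 < st.2) & (iseq st.2 <= iseq st.1)]].

(** The entry a_{k,l} is 1 exactly when k = i_l, so d_{A^i} counts the pairs
    (j, l) with j < l, 1 <= i_j <= n and i_l <= i_j.  Translating a pair by a
    multiple of r shifts i_j and i_l by the same multiple of n, and exactly one
    translate of an inversion (s, t) has i_s in [1, n]; this is a bijection from
    Inv(i) onto those pairs, inverted by the translate that puts j into [1, r].
    Inv(i) is finite because i_t grows like (n/r) t. *)

(* [functions] comes before [Defs]: its HB mixin [Inv] would shadow [Defs.Inv]. *)
From mathcomp Require Import functions.
From Pilot Require Import Defs.
From HB Require Import structures.
From mathcomp Require Import all_boot all_order all_algebra.
From mathcomp Require Import classical_sets cardinality reals constructive_ereal esum fsbigop.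
From mathcomp Require Import zify.
Import Order.TTheory GRing.Theory Num.Theory.
Local Open Scope ring_scope.
Local Open Scope classical_set_scope.

Lemma periodic_shift (f : int -> int) (p d : int) :
  (forall k, f (k + p) = f k + d) -> forall m k, f (k + m * p) = f k + m * d.
Proof.
move=> fP; elim/int_rec => [|m IHm|m IHm] k; first by rewrite !mul0r !addr0.
  have -> : k + m.+1%:Z * p = k + m%:Z * p + p by lia.
  by rewrite fP IHm; lia.
apply: (addIr d); rewrite -fP.
have -> : k + - m.+1%:Z * p + p = k + - m%:Z * p by lia.
by rewrite IHm; lia.
Qed.

Definition window_index (d x : int) : int := ((x - 1) %/ d)%Z.

Lemma window_indexP (d x : int) : 0 < d -> 1 <= x - window_index d x * d <= d.
Proof.
move=> d_gt0; have := divz_eq (x - 1) d.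
have := modz_ge0 (x - 1) (lt0r_neq0 d_gt0); have := ltz_pmod (x - 1) d_gt0.
rewrite /window_index; lia.
Qed.

Lemma window_index_unique (d x m : int) :
  0 < d -> 1 <= x + m * d <= d -> window_index d x = - m.
Proof. by move=> d_gt0; have := @window_indexP d x d_gt0; nia. Qed.

Lemma bounded_on_prefix (f : int -> int) (N : nat) :
  exists B : nat, forall j : int, 0 <= j <= N%:Z -> (`|f j| <= B)%N.
Proof.
exists (\max_(j < N.+1) `|f j|%N) => j /andP[j_ge0 j_le_N].
have jN : (`|j| < N.+1)%N by lia.
have := @leq_bigmax _ (fun i : 'I_N.+1 => `|f i|%N) (Ordinal jN).
by rewrite /= gez0_abs.
Qed.

Section PeriodicSequence.
Variables (n r : nat) (iseq : int -> int).
Hypotheses (n_gt0 : (0 < n)%N) (r_gt0 : (0 < r)%N).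
Hypothesis iseq_periodic : forall k : int, iseq (k + r%:Z) = iseq k + n%:Z.

Let iseq_shift := @periodic_shift _ _ _ iseq_periodic.

Lemma finite_Inv : finite_set (Inv r iseq).
Proof.
have [B iseqB] := bounded_on_prefix iseq r.
pose T := ((2 * B + 1) * r)%N.
apply: (sub_finite_set _ (finite_image (fun p : nat * nat => (p.1%:Z, p.2%:Z))
  (finite_setX (finite_II T) (finite_II T)))).
move=> [s t] /and4P[/= s_ge1 s_le_r s_lt_t inv_st].
have [q [m [t_eq m_lt]]] : exists q m : int, t = m + q * r /\ 0 <= m < r.
  by exists (t %/ r)%Z, (t %% r)%Z; rewrite addrC -divz_eq modz_ge0 ?ltz_pmod; lia.
have iseq_t : iseq t = iseq m + q * n by rewrite t_eq iseq_shift.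
have q_ge0 : 0 <= q by nia.
have q_le : q <= 2 * B.
  have := iseqB s ltac:(lia); have := iseqB m ltac:(lia).
  have : q <= q * n by nia.
  lia.
exists (`|s|%N, `|t|%N); last by rewrite /=; congr pair; lia.
have : t < (2 * B%:Z + 1) * r by nia.
by rewrite /T; split => /=; nia.
Qed.

Definition dA_support : set (int * int) :=
  [set jl | [&& jl.1 < jl.2, 1 <= iseq jl.1, iseq jl.1 <= n%:Z
            & iseq jl.2 <= iseq jl.1]].

Lemma dA_Amat_support (R : realType) :
  dA R n (Amat iseq) = (\esum_(jl in dA_support) (1 : \bar R))%E.
Proof.
pose e (jl : int * int) := (iseq jl.1, jl.1, iseq jl.2, jl.2).
rewrite -(esum_image _ e (fun=> 1%E)); last by move=> [j l] [j' l'] _ _ [_ -> _ ->].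
rewrite /dA esum_mkcond [RHS]esum_mkcond; apply: eq_esum => -[[[i j] k] l] _ /=.
rewrite /Amat; have [->|nij] := eqVneq i (iseq j); last first.
  rewrite mul0n [in RHS]ifF; first by case: ifP.
  apply/negbTE/negP => /set_mem [[j' l'] _ [E1 E2 _ _]].
  by move: nij; rewrite -E1 E2 eqxx.
have [->|nkl] := eqVneq k (iseq l); last first.
  rewrite muln0 [in RHS]ifF; first by case: ifP.
  apply/negbTE/negP => /set_mem [[j' l'] _ [_ _ E1 E2]].
  by move: nkl; rewrite -E1 E2 eqxx.
suff -> : ((iseq j, j, iseq l, l) \in e @` dA_support)
        = ((iseq j, j, iseq l, l) \in dA_index n) by case: ifP.
apply/idP/idP => /set_mem.
  by move=> [[j' l'] /and4P[? ? ? ?] [_ <- _ <-]]; apply/mem_set/and4P.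
by move=> /and4P[? ? ? ?]; apply/mem_set; exists (j, l) => //; apply/and4P.
Qed.

Definition to_window (st : int * int) : int * int :=
  let q := window_index n (iseq st.1) in (st.1 - q * r, st.2 - q * r).

Lemma to_window_bij : set_bij (Inv r iseq) dA_support to_window.
Proof.
have n0 : 0 < n%:Z by lia.
have r0 : 0 < r%:Z by lia.
split.
- move=> [s t] /and4P[/= _ _ s_lt_t inv_st].
  have := @window_indexP _ (iseq s) n0.
  by move=> w; apply/and4P; rewrite /= -!mulNr !iseq_shift; split; lia.
- move=> [s t] [s' t'] /set_mem/and4P[/= s1 sr _ _] /set_mem/and4P[/= s1' sr' _ _].
  rewrite /to_window /=.
  set q := window_index _ _; set q' := window_index _ _; clearbody q q'.
  move=> [E1 E2]; have E3 : (q' - q) * r = s' - s by lia.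
  have qq' : q = q' by case: (ltgtP q q') => //; nia.
  by subst q'; congr pair; lia.
- move=> [j l] /and4P[/= j_lt_l ij_ge1 ij_le_n inv_jl].
  pose q := window_index r j.
  have := @window_indexP _ j r0; rewrite -/q => j_win.
  have is1 := iseq_shift (- q) j; have is2 := iseq_shift (- q) l.
  exists (j - q * r, l - q * r).
    by rewrite /Inv /= -!mulNr is1 is2; apply/and4P; split; lia.
  rewrite /to_window /= -mulNr is1.
  rewrite (@window_index_unique _ _ q) //; last by lia.
  by congr pair; lia.
Qed.

End PeriodicSequence.

Lemma esum_one_card (R : realType) (T : choiceType) (A : set T) (c : nat) :
  (A #= `I_c)%card -> (\esum_(x in A) (1 : \bar R))%E = (c%:R : R)%:E.
Proof.
move=> Ac; have finA : finite_set A by exists c.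
rewrite esum_fset // fsbig_finite //= -(card_fset_set Ac).
by rewrite sumEFin -(natr_sum _ _ _ (fun=> 1%N)) sum1_size.
Qed.

Theorem lemma3p1p4 (R : realType) (n r : nat) (iseq : int -> int) :
  (1 <= n)%N -> (1 <= r)%N ->
  (forall k : int, iseq (k + r%:Z) = iseq k + n%:Z) ->
  exists c : nat, (Inv r iseq #= `I_c)%card /\ dA R n (Amat iseq) = (c%:R : R)%:E.
Proof.
move=> n_gt0 r_gt0 iseqP.
have [c Inv_c] := finite_Inv n r iseq n_gt0 r_gt0 iseqP.
exists c; split => //.
rewrite (dA_Amat_support n iseq R).
rewrite (reindex_esum _ _ _ (fun=> 1%E) (to_window_bij n r iseq n_gt0 r_gt0 iseqP)).
exact: (esum_one_card _ _ _ _ Inv_c).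
Qed.
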